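(* Let $\mathbf{Q}=(q_{ij})_{i,j=1}^l$ be a complex matrix with $q_{ij}q_{ji}=1$. Let $V$ be any nonlocal vertex algebra and let $\psi$ be any map from $\{u^{(i)},v^{(i)}\mid i=1,\dots,l\}$ to $V$ such that for $1\le i,j\le l$ $$Y(\psi(u^{(i)}),x_1)Y(\psi(u^{(j)}),x_2)=q_{ij}Y(\psi(u^{(j)}),x_2)Y(\psi(u^{(i)}),x_1),$$ $$Y(\psi(v^{(i)}),x_1)Y(\psi(v^{(j)}),x_2)=q_{ij}Y(\psi(v^{(j)}),x_2)Y(\psi(v^{(i)}),x_1),$$ $$Y(\psi(u^{(i)}),x_1)Y(\psi(v^{(j)}),x_2)-q_{ji}Y(\psi(v^{(j)}),x_2)Y(\psi(u^{(i)}),x_1)=\delta_{ij}x_2^{-1}\delta\left(\frac{x_1}{x_2}\right).$$ Then there exists a unique nonlocal vertex algebra homomorphism from $V_{\mathbf{Q}}$ to $V$ extending $\psi$.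
   Context: $x_2^{-1}\delta(x_1/x_2)=\sum_{n\in\mathbb{Z}}x_1^nx_2^{-n-1}$. A nonlocal vertex algebra is a complex vector space $V$ with vector $\mathbf{1}$ and linear $Y:V\to\mathrm{Hom}(V,V((x)))$, $Y(v,x)=\sum_nv_nx^{-n-1}$, with $Y(\mathbf{1},x)v=v$, $Y(v,x)\mathbf{1}\in V[[x]]$ with constant term $v$, and for $u,v,w$ some $l\ge0$ with $(x_0+x_2)^lY(u,x_0+x_2)Y(v,x_2)w=(x_0+x_2)^lY(Y(u,x_0)v,x_2)w$; a homomorphism is a linear map preserving $\mathbf{1}$ and $Y$. $\mathcal{A}_{\mathbf{Q}}$ is the unital algebra with generators $X_{i,n},Y_{i,n}$ and relations $X_{i,m}X_{j,n}=q_{ij}X_{j,n}X_{i,m}$, $Y_{i,m}Y_{j,n}=q_{ij}Y_{j,n}Y_{i,m}$, $X_{i,m}Y_{j,n}-q_{ji}Y_{j,n}X_{i,m}=\delta_{ij}\delta_{m+n+1,0}$; $V_{\mathbf{Q}}=\mathcal{A}_{\mathbf{Q}}/(\mathcal{A}_{\mathbf{Q}}\mathcal{A}^+_{\mathbf{Q}})$ with $\mathcal{A}^+_{\mathbf{Q}}$ generated by $X_{i,m},Y_{i,m}$, $m\ge0$, $\mathbf{1}=1+\mathcal{A}_{\mathbf{Q}}\mathcal{A}^+_{\mathbf{Q}}$, $u^{(i)}=X_{i,-1}\mathbf{1}$, $v^{(i)}=Y_{i,-1}\mathbf{1}$; $V_{\mathbf{Q}}$ has the unique nonlocal vertex algebra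 structure with vacuum $\mathbf{1}$, $Y(u^{(i)},x)=\sum_nX_{i,n}x^{-n-1}$, $Y(v^{(i)},x)=\sum_nY_{i,n}x^{-n-1}$. *)

From HB Require Import structures.
From mathcomp Require Import all_boot all_order all_algebra.
From mathcomp Require Import reals Rstruct complex.
From mathcomp.multinomials Require Import monalg.
From Stdlib Require Import ClassicalEpsilon.
Set Implicit Arguments. Unset Strict Implicit. Unset Printing Implicit Defensive.
Import GRing.Theory.
Local Open Scope ring_scope.
Local Open Scope quotient_scope.

Notation C := (complex Rdefinitions.R).

Definition pbool (P : Prop) : bool :=
  if excluded_middle_informative P then true else false.
Lemma pboolP (P : Prop) : reflect P (pbool P).
Proof. by rewrite /pbool; case: excluded_middle_informative => h; constructor. Qed.

Section LQuot.

Variables (K : pzRingType) (T : lmodType K) (G : T -> Prop).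

Definition span (x : T) : Prop :=
  forall P : T -> Prop, P 0 -> (forall a y z, P y -> P z -> P (a *: y + z)) ->
  (forall g, G g -> P g) -> P x.

Lemma span0 : span 0. Proof. by move=> P. Qed.
Lemma spanZD a y z : span y -> span z -> span (a *: y + z).
Proof. by move=> hy hz P h0 hc hg; apply: (hc); [exact: (hy P h0 hc hg)|exact: (hz P h0 hc hg)]. Qed.
Lemma spanD y z : span y -> span z -> span (y + z).
Proof. by move=> hy hz; rewrite -[y]scale1r; apply: spanZD. Qed.
Lemma spanZ a y : span y -> span (a *: y).
Proof. by move=> hy; rewrite -[_ *: _]addr0; apply: spanZD => //; apply: span0. Qed.
Lemma spanN y : span y -> span (- y).
Proof. by move=> hy; rewrite -scaleN1r; apply: spanZ. Qed.

Definition span_eqv (x y : T) : bool := pbool (span (x - y)).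
Lemma span_eqv_refl : reflexive span_eqv.
Proof. by move=> x; apply/pboolP; rewrite subrr; apply: span0. Qed.
Lemma span_eqv_sym : symmetric span_eqv.
Proof.
suff h : forall x y, span_eqv x y -> span_eqv y x.
  by move=> x y; apply/idP/idP; apply: h.
by move=> x y /pboolP hxy; apply/pboolP; rewrite -opprB; apply: spanN.
Qed.
Lemma span_eqv_trans : transitive span_eqv.
Proof.
move=> y x z /pboolP h1 /pboolP h2; apply/pboolP.
by have := spanD h1 h2; rewrite addrA subrK.
Qed.
Definition span_equiv := EquivRel span_eqv span_eqv_refl span_eqv_sym span_eqv_trans.

Definition lquot := {eq_quot span_equiv}.
HB.instance Definition _ := Choice.on lquot.
HB.instance Definition _ := Quotient.on lquot.
HB.instance Definition _ := EqQuotient.on lquot.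

Definition lq_pi (x : T) : lquot := \pi_lquot x.
Lemma lq_eqP x y : reflect (lq_pi x = lq_pi y) (span_eqv x y).
Proof. exact: eqmodP. Qed.
Lemma lq_piK (x : T) : span (repr (lq_pi x) - x).
Proof. by apply/pboolP/lq_eqP; rewrite /lq_pi reprK. Qed.

Definition lq_zero : lquot := lq_pi 0.
Definition lq_add (a b : lquot) : lquot := lq_pi (repr a + repr b).
Definition lq_opp (a : lquot) : lquot := lq_pi (- repr a).
Definition lq_scale (c : K) (a : lquot) : lquot := lq_pi (c *: repr a).

Lemma lq_addE x y : lq_add (lq_pi x) (lq_pi y) = lq_pi (x + y).
Proof.
apply/lq_eqP/pboolP; have := spanD (lq_piK x) (lq_piK y).
by congr span; rewrite opprD !addrA; congr (_ + _); rewrite addrAC.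
Qed.
Lemma lq_oppE x : lq_opp (lq_pi x) = lq_pi (- x).
Proof. by apply/lq_eqP/pboolP; have := spanN (lq_piK x); rewrite opprB opprK addrC. Qed.
Lemma lq_scaleE c x : lq_scale c (lq_pi x) = lq_pi (c *: x).
Proof. by apply/lq_eqP/pboolP; have := spanZ c (lq_piK x); rewrite scalerBr. Qed.

Lemma lq_ind (P : lquot -> Prop) : (forall x, P (lq_pi x)) -> forall a, P a.
Proof. by move=> h a; rewrite -[a]reprK; apply: h. Qed.

Lemma lq_addA : associative lq_add.
Proof. by elim/lq_ind=> x; elim/lq_ind=> y; elim/lq_ind=> z; rewrite !lq_addE addrA. Qed.
Lemma lq_addC : commutative lq_add.
Proof. by elim/lq_ind=> x; elim/lq_ind=> y; rewrite !lq_addE addrC. Qed.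
Lemma lq_add0 : left_id lq_zero lq_add.
Proof. by elim/lq_ind=> x; rewrite lq_addE add0r. Qed.
Lemma lq_addN : left_inverse lq_zero lq_opp lq_add.
Proof. by elim/lq_ind=> x; rewrite lq_oppE lq_addE addNr. Qed.

HB.instance Definition _ := GRing.isZmodule.Build lquot lq_addA lq_addC lq_add0 lq_addN.
Lemma lq_piD x y : lq_pi x + lq_pi y = lq_pi (x + y). Proof. exact: lq_addE. Qed.

Lemma lq_scaleA a b v : lq_scale a (lq_scale b v) = lq_scale (a * b) v.
Proof. by elim/lq_ind: v => x; rewrite !lq_scaleE scalerA. Qed.
Lemma lq_scale1 : left_id 1 lq_scale.
Proof. by elim/lq_ind=> x; rewrite lq_scaleE scale1r. Qed.
Lemma lq_scaleDr : right_distributive lq_scale +%R.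
Proof.
by move=> a; elim/lq_ind=> x; elim/lq_ind=> y;
  rewrite lq_piD !lq_scaleE lq_piD scalerDr.
Qed.
Lemma lq_scaleDl v : {morph lq_scale^~ v : a b / a + b}.
Proof.
by elim/lq_ind: v => x a b; rewrite !lq_scaleE lq_piD scalerDl.
Qed.

HB.instance Definition _ := GRing.Zmodule_isLmodule.Build K lquot
  lq_scaleA lq_scale1 lq_scaleDr lq_scaleDl.

End LQuot.

(* Y(u,x)w = sum_n u_n w x^{-n-1} is encoded by  vop u w n = u_n w.    *)

Definition binK (K : fieldType) (z : int) (k : nat) : K :=
  (\prod_(i < k) ((z - (i : nat)%:Z)%:~R : K)) / (k`!)%:R.

Section NLVA.
Variables (K : fieldType) (V : lmodType K).

(* coefficient of x0^a x2^b in (x0+x2)^l Y(u,x0+x2)Y(v,x2)w, where the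
   (a priori infinite) sum over k is cut at K0; it is the exact
   coefficient as soon as v_n w = 0 for all n >= K0 - b - 1. *)
Definition assocL (vop : V -> V -> int -> V) (u v w : V) (l : nat)
    (a b : int) (K0 : nat) : V :=
  \sum_(j < l.+1) ('C(l, j))%:R *:
    \sum_(k < K0) binK K (a - (j : nat)%:Z + (k : nat)%:Z) k *:
       vop u (vop v w ((k : nat)%:Z - (b - (l : nat)%:Z + (j : nat)%:Z) - 1))
             (- (a - (j : nat)%:Z) - 1 - (k : nat)%:Z).

(* coefficient of x0^a x2^b in (x0+x2)^l Y(Y(u,x0)v,x2)w *)
Definition assocR (vop : V -> V -> int -> V) (u v w : V) (l : nat)
    (a b : int) : V :=
  \sum_(j < l.+1) ('C(l, j))%:R *:
    vop (vop u v (- (a - (j : nat)%:Z) - 1)) w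
        (- (b - (l : nat)%:Z + (j : nat)%:Z) - 1).

Record nlva := NLVA {
  vac : V;
  vop : V -> V -> int -> V;
  vop_linl : forall w n c u1 u2,
    vop (c *: u1 + u2) w n = c *: vop u1 w n + vop u2 w n;
  vop_linr : forall u n c w1 w2,
    vop u (c *: w1 + w2) n = c *: vop u w1 n + vop u w2 n;
  vop_trunc : forall u w, exists N : int, forall n : int, N <= n -> vop u w n = 0;
  vop_vac : forall w n, vop vac w n = if n == -1 then w else 0;
  vop_create_pos : forall u (n : int), 0 <= n -> vop u vac n = 0;
  vop_create_const : forall u, vop u vac (-1) = u;
  vop_wassoc : forall u v w, exists l : nat, forall (a b : int) (K0 : nat),
    (forall n : int, (K0 : nat)%:Z - b - 1 <= n -> vop v w n = 0) ->
    assocL vop u v w l a b K0 = assocR vop u v w l a b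
}.
End NLVA.

Definition nlva_hom (K : fieldType) (A B : lmodType K)
    (SA : nlva A) (SB : nlva B) (f : A -> B) : Prop :=
  [/\ forall c x y, f (c *: x + y) = c *: f x + f y,
      f (vac SA) = vac SB &
      forall u w n, f (vop SA u w n) = vop SB (f u) (f w) n].

(* Generators: ((true, i), n) is X_{i,n}, ((false, i), n) is Y_{i,n}.    *)
Definition Gen (l : nat) := ((bool * 'I_l) * int)%type.

Definition FreeA (l : nat) := {malg C[{fmonom (Gen l)}]}.

Definition gX (l : nat) (i : 'I_l) (n : int) : FreeA l := << fmu ((true, i), n) >>.
Definition gY (l : nat) (i : 'I_l) (n : int) : FreeA l := << fmu ((false, i), n) >>.

(* defining relations of A_Q (as elements r with r = 0 in A_Q) *)
Definition relQ (l : nat) (q : 'M[C]_l) (r : FreeA l) : Prop :=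
  exists (i j : 'I_l) (m n : int),
    [\/ r = gX i m * gX j n - q i j *: (gX j n * gX i m),
         r = gY i m * gY j n - q i j *: (gY j n * gY i m) |
         r = gX i m * gY j n - q j i *: (gY j n * gX i m)
             - (if (i == j) && (m + n + 1 == 0) then 1 else 0)].

(* spanning set of the preimage in the free algebra of the left ideal
   A_Q A_Q^+ : the two-sided ideal of relations plus FreeA * A^+ *)
Definition genL (l : nat) (q : 'M[C]_l) (f : FreeA l) : Prop :=
  (exists a r b, relQ q r /\ f = a * r * b) \/
  (exists a (i : 'I_l) (m : int), 0 <= m /\ (f = a * gX i m \/ f = a * gY i m)).

Definition VQ (l : nat) (q : 'M[C]_l) : lmodType C := lquot (@genL l q).

Definition VQpi (l : nat) (q : 'M[C]_l) (f : FreeA l) : VQ q := lq_pi (@genL l q) f.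

Definition vacQ (l : nat) (q : 'M[C]_l) : VQ q := VQpi q 1.
Definition uQ (l : nat) (q : 'M[C]_l) (i : 'I_l) : VQ q := VQpi q (gX i (-1)).
Definition vQ (l : nat) (q : 'M[C]_l) (i : 'I_l) : VQ q := VQpi q (gY i (-1)).

Definition VQ_structure (l : nat) (q : 'M[C]_l) (S : nlva (VQ q)) : Prop :=
  [/\ vac S = vacQ q,
      forall i n f, vop S (uQ q i) (VQpi q f) n = VQpi q (gX i n * f) &
      forall i n f, vop S (vQ q i) (VQpi q f) n = VQpi q (gY i n * f)].

(* The free algebra on the X_{i,n}, Y_{i,n} acts on V through the modes of
   Y(psi(u^(i)),x) and Y(psi(v^(i)),x).  The hypotheses say that this action kills
   the defining relations of A_Q, and the creation property says that A_Q^+ kills the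
   vacuum, so p 1 |-> p . 1 is a well defined linear map V_Q -> V extending psi.
   The set of u on which this map intertwines the products contains the vacuum and the
   generators and is closed under linear combinations and under all products u_p v:
   weak associativity writes (u_p v)_r w in terms of u_m v_n w and of (u_p' v)_r' w with
   p' > p, which vanish for p' large, so a downward induction on p applies.  As V_Q is
   generated by the u^(i) and v^(i), the map is a homomorphism, and any two
   homomorphisms agreeing on the generators coincide. *)

From Pilot Require Import Defs.
From HB Require Import structures.
From mathcomp Require Import all_boot all_order all_algebra zify.
From mathcomp Require Import reals Rstruct complex finmap.
From mathcomp.multinomials Require Import monalg.
From Stdlib Require Import FunctionalExtensionality.
Import GRing.Theory.
Set Implicit Arguments. Unset Strict Implicit.
Local Open Scope fset_scope.
Local Open Scope ring_scope.

Section LinearFun.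
Variables (K : pzRingType) (A B : lmodType K) (f : A -> B).
Hypothesis f_linear : linear f.
HB.instance Definition _ := GRing.isLinear.Build K A B *:%R f f_linear.

Lemma linear_fun0 : f 0 = 0. Proof. exact: linear0. Qed.
Lemma linear_funB x y : f (x - y) = f x - f y. Proof. exact: linearB. Qed.
Lemma linear_funZ c x : f (c *: x) = c *: f x. Proof. exact: linearZ. Qed.
Lemma linear_fun_sum (I : Type) (r : seq I) (P : pred I) (F : I -> A) :
  f (\sum_(i <- r | P i) F i) = \sum_(i <- r | P i) f (F i).
Proof. exact: linear_sum. Qed.

End LinearFun.

Section WeakAssociativity.
Variables (K : fieldType) (V : lmodType K) (vop : V -> V -> int -> V).

Definition weak_assoc_of (u v w : V) (l : nat) : Prop :=
  forall (a b : int) (K0 : nat),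
    (forall n : int, K0%:Z - b - 1 <= n -> vop v w n = 0) ->
    assocL vop u v w l a b K0 = assocR vop u v w l a b.

Lemma sum_binomialS (T : int -> int -> V) (l : nat) (a b : int) :
  \sum_(0 <= j < l.+2) 'C(l.+1, j)%:R *: T (a - j%:Z) (b - l.+1%:Z + j%:Z) =
  \sum_(0 <= j < l.+1) 'C(l, j)%:R *: T (a - j%:Z) ((b - 1) - l%:Z + j%:Z) +
  \sum_(0 <= j < l.+1) 'C(l, j)%:R *: T ((a - 1) - j%:Z) (b - l%:Z + j%:Z).
Proof.
rewrite big_nat_recl // bin0.
under eq_bigr do rewrite binS natrD scalerDl.
rewrite big_split /= addrA; congr (_ + _); last first.
  by apply: eq_bigr => j _; congr (_ *: T _ _); lia.
rewrite [in LHS]big_nat_recr //= bin_small //.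
rewrite [X in _ + (_ + X)](_ : _ = 0) ?addr0; last by rewrite scale0r.
rewrite [in RHS]big_nat_recl // bin0; congr (_ + _); first by congr (_ *: T _ _); lia.
by apply: eq_bigr => j _; congr (_ *: T _ _); lia.
Qed.

(* Coefficients of [x0^a x2^b] in [Y(u,x0+x2)Y(v,x2)w] (truncated at [K0]) and in
   [Y(Y(u,x0)v,x2)w]; [assocL] and [assocR] are their binomial combinations. *)
Definition coef_iterate u v w (K0 : nat) (a b : int) : V :=
  \sum_(k < K0) binK K (a + k%:Z) k *: vop u (vop v w (k%:Z - b - 1)) (- a - 1 - k%:Z).
Definition coef_assoc u v w (a b : int) : V := vop (vop u v (- a - 1)) w (- b - 1).

Lemma assocLE u v w l a b K0 : assocL vop u v w l a b K0 =
  \sum_(0 <= j < l.+1) 'C(l, j)%:R *: coef_iterate u v w K0 (a - j%:Z) (b - l%:Z + j%:Z).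
Proof. by rewrite /assocL big_mkord. Qed.

Lemma assocRE u v w l a b : assocR vop u v w l a b =
  \sum_(0 <= j < l.+1) 'C(l, j)%:R *: coef_assoc u v w (a - j%:Z) (b - l%:Z + j%:Z).
Proof. by rewrite /assocR big_mkord. Qed.

(* Multiplying the identity by [(x0 + x2)^d] keeps it true. *)
Lemma weak_assoc_ofD u v w l d :
  weak_assoc_of u v w l -> weak_assoc_of u v w (l + d).
Proof.
move=> hl; elim: d => [|d IH]; first by rewrite addn0.
move=> a b K0 hK0; rewrite addnS assocLE assocRE !sum_binomialS.
rewrite -!assocLE -!assocRE IH; last by move=> n hn; apply: hK0; lia.
by rewrite IH.
Qed.

Lemma assocR_head u v w L p r :
  assocR vop u v w L (- p - 1) (L%:Z - 1 - r) = vop (vop u v p) w r +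
  \sum_(0 <= j < L) 'C(L, j.+1)%:R *: vop (vop u v (p + j.+1%:Z)) w (r - j.+1%:Z).
Proof.
rewrite assocRE big_nat_recl // bin0 scale1r /coef_assoc.
congr (vop (vop _ _ _) _ _ + _); try lia.
by apply: eq_bigr => j _; congr (_ *: vop (vop _ _ _) _ _); lia.
Qed.

(* Weak associativity expresses [(u_p v)_r w] through products [(u_p' v)_r' w]
   with [p' > p]; these vanish once [p'] exceeds the truncation order of [Y(u,x)v]. *)
Lemma vop_vop_recursion u v w L p r K0 :
  weak_assoc_of u v w L ->
  (forall n : int, K0%:Z - (L%:Z - 1 - r) - 1 <= n -> vop v w n = 0) ->
  vop (vop u v p) w r = assocL vop u v w L (- p - 1) (L%:Z - 1 - r) K0 -
    \sum_(0 <= j < L) 'C(L, j.+1)%:R *: vop (vop u v (p + j.+1%:Z)) w (r - j.+1%:Z).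
Proof. by move=> hL hK0; rewrite (hL _ _ _ hK0) assocR_head addrK. Qed.

End WeakAssociativity.

Lemma vop0l (K : fieldType) (V : lmodType K) (S : nlva V) w n : vop S 0 w n = 0.
Proof. exact: (linear_fun0 (vop_linl S w n)). Qed.

Section Intertwining.
Variables (K : fieldType) (A B : lmodType K) (SA : nlva A) (SB : nlva B) (f : A -> B).
Hypothesis f_linear : linear f.

Definition intertwines (u : A) : Prop :=
  forall w n, f (vop SA u w n) = vop SB (f u) (f w) n.

Lemma intertwinesD c u1 u2 :
  intertwines u1 -> intertwines u2 -> intertwines (c *: u1 + u2).
Proof. by move=> h1 h2 w n; rewrite !vop_linl f_linear h1 h2 f_linear vop_linl. Qed.

Lemma intertwines_vac : f (vac SA) = vac SB -> intertwines (vac SA).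
Proof.
move=> f_vac w n; rewrite f_vac !vop_vac.
by case: ifP => // _; apply: (linear_fun0 f_linear).
Qed.

Lemma intertwines_assocL u v w L a b K0 : intertwines u -> intertwines v ->
  f (assocL (vop SA) u v w L a b K0) = assocL (vop SB) (f u) (f v) (f w) L a b K0.
Proof.
move=> hu hv; rewrite /assocL (linear_fun_sum f_linear); apply: eq_bigr => j _.
rewrite (linear_funZ f_linear) (linear_fun_sum f_linear); congr (_ *: _).
by apply: eq_bigr => k _; rewrite (linear_funZ f_linear) hu hv.
Qed.

Lemma intertwines_vop u v p :
  intertwines u -> intertwines v -> intertwines (vop SA u v p).
Proof.
move=> hu hv w r; rewrite hu.
have [lA hA] := vop_wassoc SA u v w.
have [lB hB] := vop_wassoc SB (f u) (f v) (f w).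
pose L := (lA + lB)%N.
have hAL : weak_assoc_of (vop SA) u v w L by apply: weak_assoc_ofD.
have hBL : weak_assoc_of (vop SB) (f u) (f v) (f w) L.
  by rewrite /L addnC; apply: weak_assoc_ofD.
have [NA hNA] := vop_trunc SA u v; have [NB hNB] := vop_trunc SB (f u) (f v).
have [MA hMA] := vop_trunc SA v w; have [MB hMB] := vop_trunc SB (f v) (f w).
suff H : forall (d : nat) p r, Num.max NA NB - d%:Z <= p ->
    f (vop SA (vop SA u v p) w r) = vop SB (vop SB (f u) (f v) p) (f w) r.
  by apply: (H (absz (Num.max NA NB - p))); lia.
elim=> [|d IH] {}p {}r hp.
  by rewrite hNA ?hNB ?vop0l ?(linear_fun0 f_linear) //; lia.
pose K0 := absz (Num.max MA MB + (L%:Z - 1 - r) + 1).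
rewrite (vop_vop_recursion p hAL (K0 := K0)); last by move=> n hn; apply: hMA; lia.
rewrite (vop_vop_recursion p hBL (K0 := K0)); last by move=> n hn; apply: hMB; lia.
rewrite (linear_funB f_linear) intertwines_assocL // (linear_fun_sum f_linear).
congr (_ - _); apply: eq_bigr => j _.
by rewrite (linear_funZ f_linear) IH //; lia.
Qed.

End Intertwining.

Lemma malg_ind (R : ringType) (M : monomType) (P : {malg R[M]} -> Prop) :
  P 0 -> (forall c k p, P p -> P (c *: << k >> + p)) -> forall p, P p.
Proof.
move=> h0 hs p; rewrite (monalgE p); apply: big_rec => // k r _ hr.
have -> : << p@_k *g k >> = p@_k *: << k >> :> {malg R[M]}.
  apply/malgP => k'; rewrite mcoeffZ !mcoeffU.
  by case: (k == k'); rewrite ?mulr1n ?mulr0n ?mulr1 ?mulr0.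
exact: hs.
Qed.

Lemma malgU_fmonom_nil (R : ringType) (I : choiceType) :
  << FMonom ([::] : seq I) >> = 1 :> {malg R[{fmonom I}]}.
Proof. by have -> : FMonom ([::] : seq I) = mone by apply: val_inj; rewrite /= fm1. Qed.

Lemma malgU_fmonom_cons (R : ringType) (I : choiceType) (g : I) (s : seq I) :
  << FMonom (g :: s) >> = << fmu g >> * << FMonom s >> :> {malg R[{fmonom I}]}.
Proof.
rewrite malgM_def fgmulUU mulr1.
have -> : FMonom (g :: s) = mmul (fmu g) (FMonom s).
  by apply: val_inj; rewrite /= fmM fmU.
by [].
Qed.

Section FreeAlgebraAction.
Variables (K : comNzRingType) (V : lmodType K) (I : choiceType) (act : I -> V -> V).
Hypothesis act_linear : forall g, linear (act g).

Definition monom_act (m : {fmonom I}) (x : V) : V := foldr act x m.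
Definition malg_act (p : {malg K[{fmonom I}]}) (x : V) : V :=
  \sum_(k <- msupp p) p@_k *: monom_act k x.

Lemma monom_act_linear m : linear (monom_act m).
Proof.
case: m => s c x y; rewrite /monom_act /=.
by elim: s => [|g s IH] //=; rewrite IH act_linear.
Qed.

Lemma monom_actM m1 m2 x : monom_act (mmul m1 m2) x = monom_act m1 (monom_act m2 x).
Proof. by rewrite /monom_act fmM foldr_cat. Qed.

Lemma malg_actEw (d : {fset {fmonom I}}) p x : msupp p `<=` d ->
  malg_act p x = \sum_(k <- d) p@_k *: monom_act k x.
Proof.
move=> le; rewrite /malg_act [LHS](big_fset_incl _ le) => //= k _ /mcoeff_outdom ->.
by rewrite scale0r.
Qed.

Lemma malg_act0 x : malg_act 0 x = 0.
Proof. by rewrite /malg_act msupp0 big_seq_fset0. Qed.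

Lemma malg_actD p r x : malg_act (p + r) x = malg_act p x + malg_act r x.
Proof.
rewrite (@malg_actEw (msupp p `|` msupp r)); last exact: msuppD_le.
rewrite (@malg_actEw (msupp p `|` msupp r) p); last exact: fsubsetUl.
rewrite (@malg_actEw (msupp p `|` msupp r) r); last exact: fsubsetUr.
by rewrite -big_split; apply: eq_bigr => k _; rewrite mcoeffD scalerDl.
Qed.

Lemma malg_actZ c p x : malg_act (c *: p) x = c *: malg_act p x.
Proof.
rewrite (@malg_actEw (msupp p)) ?msuppZ_le // /malg_act scaler_sumr.
by apply: eq_bigr => k _; rewrite mcoeffZ scalerA.
Qed.

Lemma malg_actB p r x : malg_act (p - r) x = malg_act p x - malg_act r x.
Proof. by rewrite malg_actD -[- r]scaleN1r malg_actZ scaleN1r. Qed.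

Lemma malg_act_sum (J : Type) (r : seq J) (P : pred J)
    (F : J -> {malg K[{fmonom I}]}) x :
  malg_act (\sum_(j <- r | P j) F j) x = \sum_(j <- r | P j) malg_act (F j) x.
Proof. exact: (big_morph (malg_act^~ x) (fun p r => malg_actD p r x) (malg_act0 x)). Qed.

Lemma malg_actU c k x : malg_act << c *g k >> x = c *: monom_act k x.
Proof. by rewrite (@malg_actEw [fset k]) ?msuppU_le // big_seq_fset1 mcoeffUU. Qed.

Lemma malg_act_linear p : linear (malg_act p).
Proof.
move=> c x y; rewrite /malg_act scaler_sumr -big_split; apply: eq_bigr => k _.
by rewrite monom_act_linear scalerDr !scalerA mulrC.
Qed.

Lemma malg_actM p r x : malg_act (p * r) x = malg_act p (malg_act r x).
Proof.
rewrite malgME malg_act_sum [in RHS]/malg_act; apply: eq_bigr => k1 _.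
rewrite malg_act_sum (linear_fun_sum (monom_act_linear k1)) scaler_sumr.
apply: eq_bigr => k2 _.
by rewrite malg_actU monom_actM (linear_funZ (monom_act_linear k1)) scalerA.
Qed.

Lemma malg_act1 x : malg_act 1 x = x.
Proof. by rewrite -[1]/<< 1 *g mone >> malg_actU scale1r /monom_act fm1. Qed.

Lemma malg_act_fmu g x : malg_act << fmu g >> x = act g x.
Proof. by rewrite -[<< fmu g >>]/<< 1 *g fmu g >> malg_actU scale1r /monom_act fmU. Qed.

End FreeAlgebraAction.

Section VQGeneration.
Variables (l : nat) (q : 'M[C]_l) (SQ : nlva (VQ q)).
Hypothesis hSQ : VQ_structure SQ.

Lemma VQpi_linear : linear (VQpi q).
Proof. by move=> c p r; rewrite /VQpi -lq_piD -lq_scaleE. Qed.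

Lemma VQ_ind (P : VQ q -> Prop) : (forall p, P (VQpi q p)) -> forall x, P x.
Proof. exact: lq_ind. Qed.

Lemma VQ_gen_ind (P : VQ q -> Prop) :
  P (vac SQ) -> (forall c x y, P x -> P y -> P (c *: x + y)) ->
  (forall i n x, P x -> P (vop SQ (uQ q i) x n)) ->
  (forall i n x, P x -> P (vop SQ (vQ q i) x n)) ->
  forall x, P x.
Proof.
case: hSQ => hvac hu hv Pvac Plin Pu Pv.
have P0 : P 0 by rewrite -(addNr (vac SQ)) -scaleN1r; apply: Plin.
have Pmono s : P (VQpi q << FMonom s >>).
  elim: s => [|[[[] i] n] s IH]; rewrite ?malgU_fmonom_cons.
  - by rewrite malgU_fmonom_nil (_ : VQpi q 1 = vac SQ) // hvac.
  - by rewrite -hu; apply: Pu.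
  - by rewrite -hv; apply: Pv.
elim/VQ_ind => p; elim/malg_ind: p => [|c [s] p IH]; first exact: P0.
by rewrite VQpi_linear; apply: Plin.
Qed.

Lemma nlva_hom_VQ_eq (V : lmodType C) (S : nlva V) (f g : VQ q -> V) :
  nlva_hom SQ S f -> nlva_hom SQ S g ->
  (forall i, f (uQ q i) = g (uQ q i)) -> (forall i, f (vQ q i) = g (vQ q i)) ->
  f = g.
Proof.
case=> f_lin f_vac f_vop [g_lin g_vac g_vop] fgu fgv.
apply: functional_extensionality; elim/VQ_gen_ind.
- by rewrite f_vac g_vac.
- by move=> c x y fgx fgy; rewrite f_lin g_lin fgx fgy.
- by move=> i n x fgx; rewrite f_vop g_vop fgu fgx.
- by move=> i n x fgx; rewrite f_vop g_vop fgv fgx.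
Qed.

End VQGeneration.

Section Existence.
Variables (l : nat) (q : 'M[C]_l) (V : lmodType C) (S : nlva V) (psu psv : 'I_l -> V).
Hypothesis hXX : forall (i j : 'I_l) (m n : int) (w : V),
  vop S (psu i) (vop S (psu j) w n) m = q i j *: vop S (psu j) (vop S (psu i) w m) n.
Hypothesis hYY : forall (i j : 'I_l) (m n : int) (w : V),
  vop S (psv i) (vop S (psv j) w n) m = q i j *: vop S (psv j) (vop S (psv i) w m) n.
Hypothesis hXY : forall (i j : 'I_l) (m n : int) (w : V),
  vop S (psu i) (vop S (psv j) w n) m - q j i *: vop S (psv j) (vop S (psu i) w m) n
  = (if (i == j) && (m + n + 1 == 0) then w else 0).

Definition gen_act (g : Gen l) : V -> V :=
  let: ((b, i), n) := g in fun x => vop S (if b then psu i else psv i) x n.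

Lemma gen_act_linear g : linear (gen_act g).
Proof. by case: g => [[b i] n]; apply: vop_linr. Qed.

Local Notation act := (malg_act gen_act).

Lemma act_gX i n x : act (gX i n) x = vop S (psu i) x n.
Proof. exact: malg_act_fmu. Qed.

Lemma act_gY i n x : act (gY i n) x = vop S (psv i) x n.
Proof. exact: malg_act_fmu. Qed.

Lemma act_commutator (a b : FreeA l) (c : C) (A B : V -> V) x :
  (forall y, act a y = A y) -> (forall y, act b y = B y) ->
  act (a * b - c *: (b * a)) x = A (B x) - c *: B (A x).
Proof.
move=> ha hb.
by rewrite malg_actB malg_actZ !(malg_actM gen_act_linear) ha hb ha hb.
Qed.

Lemma act_relQ r x : relQ q r -> act r x = 0.
Proof.
case=> i [j [m [n [] ->]]].
- by rewrite (act_commutator _ _ (act_gX i m) (act_gX j n)) hXX subrr.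
- by rewrite (act_commutator _ _ (act_gY i m) (act_gY j n)) hYY subrr.
- rewrite malg_actB (act_commutator _ _ (act_gX i m) (act_gY j n)) hXY.
  by case: ifP => _; rewrite ?malg_act1 ?malg_act0 subrr.
Qed.

Lemma act_vac_genL p : genL q p -> act p (vac S) = 0.
Proof.
have act0 r := linear_fun0 (malg_act_linear gen_act_linear r).
case=> [[a [r [b [hr ->]]]]|[a [i [m [hm [->|->]]]]]].
- by rewrite !(malg_actM gen_act_linear) (act_relQ _ hr) act0.
- by rewrite (malg_actM gen_act_linear) act_gX vop_create_pos // act0.
- by rewrite (malg_actM gen_act_linear) act_gY vop_create_pos // act0.
Qed.

Lemma act_vac_span p : Defs.span (genL q) p -> act p (vac S) = 0.
Proof.
move=> hp; apply: (hp (fun r => act r (vac S) = 0)); last exact: act_vac_genL.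
- exact: malg_act0.
- by move=> a y z hy hz; rewrite malg_actD malg_actZ hy hz scaler0 addr0.
Qed.

Definition VQ_map (x : VQ q) : V := act (repr x) (vac S).

Lemma VQ_mapE p : VQ_map (VQpi q p) = act p (vac S).
Proof.
apply/eqP; rewrite -subr_eq0 -malg_actB; apply/eqP/act_vac_span.
exact: lq_piK.
Qed.

Lemma VQ_map_linear : linear VQ_map.
Proof.
move=> c x y; elim/VQ_ind: x => p; elim/VQ_ind: y => r.
by rewrite -VQpi_linear !VQ_mapE malg_actD malg_actZ.
Qed.

Lemma VQ_map_u i : VQ_map (uQ q i) = psu i.
Proof. by rewrite VQ_mapE act_gX vop_create_const. Qed.

Lemma VQ_map_v i : VQ_map (vQ q i) = psv i.
Proof. by rewrite VQ_mapE act_gY vop_create_const. Qed.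

Variables (SQ : nlva (VQ q)) (hSQ : VQ_structure SQ).

Lemma VQ_map_hom : nlva_hom SQ S VQ_map.
Proof.
case: (hSQ) => hvac hu hv.
have map_vac : VQ_map (vac SQ) = vac S by rewrite hvac VQ_mapE malg_act1.
split=> //; first exact: VQ_map_linear.
elim/(VQ_gen_ind hSQ).
- exact: intertwines_vac VQ_map_linear map_vac.
- exact: intertwinesD VQ_map_linear.
- move=> i n x hx; apply: (intertwines_vop VQ_map_linear) => // w m; elim/VQ_ind: w => p.
  by rewrite hu VQ_map_u !VQ_mapE (malg_actM gen_act_linear) act_gX.
- move=> i n x hx; apply: (intertwines_vop VQ_map_linear) => // w m; elim/VQ_ind: w => p.
  by rewrite hv VQ_map_v !VQ_mapE (malg_actM gen_act_linear) act_gY.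
Qed.

End Existence.

Unset Implicit Arguments.

Theorem proposition3p8 (l : nat) (q : 'M[C]_l)
  (hq : forall i j : 'I_l, q i j * q j i = 1)
  (SQ : nlva (VQ q)) (hSQ : VQ_structure SQ)
  (V : lmodType C) (S : nlva V) (psu psv : 'I_l -> V)
  (hXX : forall (i j : 'I_l) (m n : int) (w : V),
     vop S (psu i) (vop S (psu j) w n) m = q i j *: vop S (psu j) (vop S (psu i) w m) n)
  (hYY : forall (i j : 'I_l) (m n : int) (w : V),
     vop S (psv i) (vop S (psv j) w n) m = q i j *: vop S (psv j) (vop S (psv i) w m) n)
  (hXY : forall (i j : 'I_l) (m n : int) (w : V),
     vop S (psu i) (vop S (psv j) w n) m - q j i *: vop S (psv j) (vop S (psu i) w m) n
     = (if (i == j) && (m + n + 1 == 0) then w else 0)) :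
  exists! f : VQ q -> V,
    nlva_hom SQ S f /\ (forall i, f (uQ q i) = psu i) /\ (forall i, f (vQ q i) = psv i).
Proof.
(* [hq] is what makes V_Q a nonlocal vertex algebra; that structure is given here as [SQ]. *)
have f_hom := VQ_map_hom hXX hYY hXY hSQ.
have f_u := VQ_map_u hXX hYY hXY; have f_v := VQ_map_v hXX hYY hXY.
exists (VQ_map S psu psv); split=> [|g [g_hom [g_u g_v]]]; first by [].
by apply: (nlva_hom_VQ_eq hSQ f_hom g_hom) => i; rewrite ?f_u ?g_u ?f_v ?g_v.
Qed.
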